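(* Let $L=1$ and $\vec m=(a,b)\in\mathcal R^2$ be arbitrary. For every topological space $X$ and every $n\ge1$, $\partial_n\circ\mathcal{SD}_n=\mathcal{SD}_{n-1}\circ\partial_n$ as maps $\mathcal K_n(X)\to\mathcal K_{n-1}(X)$ (and trivially for $n=0$).
   Context: $\mathcal R$ is a commutative ring with unit. $\mathcal S_n(X)$ = continuous maps $[0,1]^n\to X$ ($[0,1]^0=\{0\}$), $\mathcal K_n(X)$ the free $\mathcal R$-module on $\mathcal S_n(X)$, $\mathcal K_{-1}(X)=0$. Boundary: for $n\ge1$, $\partial_n(T)=\sum_{j=1}^n(-1)^{j+1}(a\langle T\rangle_{n,0,j}+b\langle T\rangle_{n,1,j})$ where $\langle T\rangle_{n,i,j}(x_1,\dots,x_{n-1})=T(x_1,\dots,x_{j-1},i,x_j,\dots,x_{n-1})$ ($\langle T\rangle_{1,i,1}(0)=T(i)$), extended linearly, $\partial_0=0$. Subdivision maps $\mathcal{SD}_n:\mathcal K_n(X)\to\mathcal K_n(X)$ ($\mathcal R$-linear): $\mathcal{SD}_{-1}=0$, $\mathcal{SD}_0(T)=-T$, and for $n\ge1$ $$\mathcal{SD}_n(T)=\sum_{\vec e\in\{0,2\}^n}\ \sum_{\vec v\in\mathcal V_{\vec e,n}}\Big(-\prod_{i=1}^nv_i\Big)\,T\circ h_{\vec e,\vec v},$$ where $\mathcal V_{\vec e,n}$ is the set of $\vec v\in\{-1,1\}^n$ with $v_i=1$ whenever $e_i=0$ (and $v_i\in\{-1,1\}$ arbitrary when $e_i=2$), and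 $h_{\vec e,\vec v}:[0,1]^n\to[0,1]^n$, $h_{\vec e,\vec v}(x)_i=\frac13(e_i+v_ix_i)$. *)

From HB Require Import structures.
From mathcomp Require Import all_boot all_order all_algebra.
From mathcomp Require Import boolp classical_sets reals topology normedtype.
Import numFieldNormedType.Exports.
Set Implicit Arguments. Unset Strict Implicit. Unset Printing Implicit Defensive.
Import Order.TTheory GRing.Theory Num.Theory.
Local Open Scope ring_scope.
Local Open Scope classical_set_scope.

Section Cubes.
Variable (R : realType) (X : topologicalType).

(* [0,1]^n as a subset of row vectors 'rV[R]_n ('rV_0 is the one-point space {0}). *)
Definition cube (n : nat) : set 'rV[R]_n :=
  [set x | forall i : 'I_n, 0 <= x ord0 i <= 1].

Definition clamp (n : nat) (x : 'rV[R]_n) : 'rV[R]_n :=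
  \row_i (Num.min 1 (Num.max 0 (x ord0 i))).

(* A singular n-cube (continuous map [0,1]^n -> X) is represented canonically
   by the function f : R^n -> X with f = f o clamp, continuous on [0,1]^n. *)
Definition singular_cube (n : nat) (f : 'rV[R]_n -> X) : Prop :=
  {within (@cube n), continuous f} /\ forall x, f x = f (clamp x).

(* precomposition of a cube with a map g sending [0,1]^m to [0,1]^n,
   put in canonical form *)
Definition precomp (n m : nat) (T : 'rV[R]_n -> X) (g : 'rV[R]_m -> 'rV[R]_n)
  : 'rV[R]_m -> X := fun x => T (g (clamp x)).

(* formal R-linear combinations of (representatives of) cubes *)
Definition chain (Rg : Type) (n : nat) := seq (Rg * ('rV[R]_n -> X)).

(* membership of a formal combination in K_n(X) *)
Definition is_chain (Rg : Type) (n : nat) (c : chain Rg n) : Prop :=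
  foldr (fun p P => singular_cube p.2 /\ P) True c.

(* coefficient of the generator U: K_n(X) is the free module, so two formal
   combinations are equal in K_n(X) iff all coefficients agree *)
Definition coeff (Rg : pzRingType) (n : nat) (c : chain Rg n)
  (U : 'rV[R]_n -> X) : Rg :=
  \sum_(p <- c) (if `[< p.2 = U >] then p.1 else 0).

Definition lin (Rg : pzRingType) (n m : nat)
  (g : ('rV[R]_n -> X) -> chain Rg m) (c : chain Rg n) : chain Rg m :=
  flatten [seq [seq (p.1 * q.1, q.2) | q <- g p.2] | p <- c].

(* insertion of the constant c at (0-indexed) position j *)
Definition ins (n : nat) (j : 'I_n.+1) (c : R) (x : 'rV[R]_n) : 'rV[R]_n.+1 :=
  \row_k (match unlift j k with None => c | Some k' => x ord0 k' end).

(* <T>_{n+1,i,j+1} *)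
Definition face (n : nat) (T : 'rV[R]_n.+1 -> X) (i : R) (j : 'I_n.+1)
  : 'rV[R]_n -> X := precomp T (ins j i).

(* boundary of a generator in degree n+1 >= 1 (sign (-1)^{(j+1)+1} = (-1)^j
   for the 0-indexed j) *)
Definition bd_gen (Rg : pzRingType) (a b : Rg) (n : nat) (T : 'rV[R]_n.+1 -> X)
  : chain Rg n :=
  flatten [seq [:: ((-1) ^+ j * a, face T 0 j); ((-1) ^+ j * b, face T 1 j)]
          | j : 'I_n.+1 <- enum 'I_n.+1].

(* e : bool-encoded vector in {0,2}^n (true = 2), v : bool-encoded vector in
   {-1,1}^n (true = -1) *)
Definition esel (b : bool) : R := if b then 2 else 0.
Definition vsel (Rg : pzRingType) (b : bool) : Rg := if b then -1 else 1.

Definition h (n : nat) (e v : {ffun 'I_n -> bool}) (x : 'rV[R]_n) : 'rV[R]_n :=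
  \row_i ((esel (e i) + vsel R (v i) * x ord0 i) / 3).

(* v in V_{e,n}: v_i = 1 whenever e_i = 0 *)
Definition inV (n : nat) (e v : {ffun 'I_n -> bool}) : bool :=
  [forall i, ~~ e i ==> ~~ v i].

Definition SD_gen (Rg : pzRingType) (n : nat) (T : 'rV[R]_n -> X) : chain Rg n :=
  match n return ('rV[R]_n -> X) -> chain Rg n with
  | 0 => fun T => [:: (-1, T)]
  | n'.+1 => fun T =>
     [seq (- \prod_(i < n'.+1) vsel Rg (ev.2 i), precomp T (h ev.1 ev.2))
     | ev : ({ffun 'I_n'.+1 -> bool} * {ffun 'I_n'.+1 -> bool})%type <- enum [set ev : {ffun 'I_n'.+1 -> bool} * {ffun 'I_n'.+1 -> bool}
                  | inV ev.1 ev.2]]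
  end T.

End Cubes.

From HB Require Import structures.
From mathcomp Require Import all_boot all_order all_algebra.
From mathcomp Require Import boolp classical_sets reals topology normedtype.
From mathcomp Require Import ring lra.
Import numFieldNormedType.Exports.
Set Implicit Arguments. Unset Strict Implicit. Unset Printing Implicit Defensive.
Import Order.TTheory GRing.Theory Num.Theory.
Local Open Scope ring_scope.

(* Both sides are linear, so it suffices to test them on a single cube T against
   an arbitrary functional G on (n-1)-cubes.  Fix a face direction j and split
   each (e, v) at coordinate j: the j-th face at level i of T o h_{e,v} is the
   face of T at level (e_j + v_j i)/3, precomposed with h of the remaining
   coordinates.  Summing over the three admissible pairs (e_j, v_j), the faces
   at the interior levels 1/3 and 2/3 cancel, and the faces at levels 0 and 1
   are exactly the j-th boundary terms of T, subdivided. *)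

Section Subdivision.
Variables (Rg : comPzRingType) (R : realType) (X : topologicalType).

Definition kdelta n (U V : 'rV[R]_n -> X) : Rg := if `[< V = U >] then 1 else 0.

Lemma coeffE n (c : chain R X Rg n) U : coeff c U = \sum_(p <- c) p.1 * kdelta U p.2.
Proof. by apply: eq_bigr => p _; rewrite /kdelta; case: ifP; rewrite ?mulr1 ?mulr0. Qed.

Lemma big_lin m k (g : ('rV[R]_m -> X) -> chain R X Rg k) (c : chain R X Rg m)
    (G : ('rV[R]_k -> X) -> Rg) :
  \sum_(q <- lin g c) q.1 * G q.2 = \sum_(p <- c) p.1 * \sum_(q <- g p.2) q.1 * G q.2.
Proof.
rewrite big_flatten big_map; apply: eq_bigr => p _.
by rewrite big_map mulr_sumr; apply: eq_bigr => q _; rewrite mulrA.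
Qed.

Lemma big_bd_gen (a b : Rg) n (T : 'rV[R]_n.+1 -> X) (G : ('rV[R]_n -> X) -> Rg) :
  \sum_(p <- bd_gen a b T) p.1 * G p.2 = \sum_(j < n.+1)
    ((-1) ^+ j * a * G (face T 0 j) + (-1) ^+ j * b * G (face T 1 j)).
Proof.
rewrite big_flatten big_map big_enum; apply: eq_bigr => j _.
by rewrite big_cons big_seq1.
Qed.

Definition SD_eval m (T : 'rV[R]_m -> X) (G : ('rV[R]_m -> X) -> Rg) : Rg :=
  \sum_(e : {ffun 'I_m -> bool}) \sum_(v : {ffun 'I_m -> bool})
    (if inV e v then - (\prod_i vsel Rg (v i)) * G (precomp T (h e v)) else 0).

Lemma big_SD_gen m (T : 'rV[R]_m -> X) (G : ('rV[R]_m -> X) -> Rg) :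
  \sum_(p <- SD_gen Rg T) p.1 * G p.2 = SD_eval T G.
Proof.
case: m T G => [|m] T G; last first.
  rewrite /SD_eval big_map big_enum big_mkcond pair_big; apply: eq_bigr => -[e v] _ /=.
  by congr (if _ then _ else _); apply/idP/idP; rewrite in_setE.
pose e0 := [ffun i : 'I_0 => false].
have ffun0 (f : {ffun 'I_0 -> bool}) : f = e0 by apply/ffunP => -[].
rewrite /SD_eval (big_pred1 e0) => [|f]; last by rewrite [f]ffun0 /= eqxx.
rewrite (big_pred1 e0) => [|f]; last by rewrite [f]ffun0 /= eqxx.
have -> : precomp T (h e0 e0) = T.
  by apply/funext => x; congr T; apply/rowP => -[].
have -> : inV e0 e0 by apply/forallP => -[].
by rewrite big_ord0 big_seq1.
Qed.

Lemma SD_eval_sum m (T : 'rV[R]_m -> X) (I : finType) (F : I -> ('rV[R]_m -> X) -> Rg) :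
  SD_eval T (fun S => \sum_i F i S) = \sum_i SD_eval T (F i).
Proof.
rewrite exchange_big; apply: eq_bigr => e _; rewrite exchange_big.
apply: eq_bigr => v _; case: ifP => _; last by rewrite big1.
exact: mulr_sumr.
Qed.

Definition ins_ffun n (j : 'I_n.+1) (c : bool) (f : {ffun 'I_n -> bool}) :
    {ffun 'I_n.+1 -> bool} :=
  [ffun k => if unlift j k is Some k' then f k' else c].

Lemma ins_ffun_at n (j : 'I_n.+1) c f : ins_ffun j c f j = c.
Proof. by rewrite ffunE unlift_none. Qed.

Lemma ins_ffun_lift n (j : 'I_n.+1) c f k : ins_ffun j c f (lift j k) = f k.
Proof. by rewrite ffunE liftK. Qed.

Lemma big_ins_ffun (K : Type) (idx : K) (op : Monoid.com_law idx) n (j : 'I_n.+1)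
    (F : {ffun 'I_n.+1 -> bool} -> K) :
  \big[op/idx]_f F f = \big[op/idx]_c \big[op/idx]_f F (ins_ffun j c f).
Proof.
rewrite pair_big (reindex (fun p => ins_ffun j p.1 p.2)) //=.
exists (fun f => (f j, [ffun k => f (lift j k)])) => [[c f] _|f _] /=.
  by rewrite ins_ffun_at; congr pair; apply/ffunP => k; rewrite ffunE ins_ffun_lift.
by apply/ffunP => k; rewrite ffunE; case: unliftP => [k' ->|->] //; rewrite ffunE.
Qed.

Lemma inV_ins_ffun n (j : 'I_n.+1) ce cv e v :
  inV (ins_ffun j ce e) (ins_ffun j cv v) = (~~ ce ==> ~~ cv) && inV e v.
Proof.
apply/forallP/andP => [H|[Hj /forallP H] k].
  split; first by have := H j; rewrite !ins_ffun_at.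
  by apply/forallP => k; have := H (lift j k); rewrite !ins_ffun_lift.
by case: (unliftP j k) => [k' ->|->]; rewrite ?ins_ffun_lift ?ins_ffun_at.
Qed.

Lemma prod_vsel_ins_ffun n (j : 'I_n.+1) cv v :
  \prod_i vsel Rg (ins_ffun j cv v i) = vsel Rg cv * \prod_i vsel Rg (v i).
Proof.
rewrite (bigD1_ord j) //= ins_ffun_at; congr (_ * _).
by apply: eq_bigr => i _; rewrite ins_ffun_lift.
Qed.

Lemma clamp01_id (r : R) : 0 <= r <= 1 -> Num.min 1 (Num.max 0 r) = r.
Proof. by case/andP => r0 r1; rewrite (max_idPr r0); apply/min_idPr. Qed.

Lemma clamp01_in (r : R) : 0 <= Num.min 1 (Num.max 0 r) <= 1.
Proof. by rewrite le_min ler01 le_max lexx ge_min lexx. Qed.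

(* [inV e v] makes [h e v] map [0,1]^n into itself, so the clamps inserted by
   [precomp] are harmless. *)
Lemma face_precomp_h n (T : 'rV[R]_n.+1 -> X) (j : 'I_n.+1) ce cv e v (c : R) :
  inV e v -> 0 <= c <= 1 ->
  face (precomp T (h (ins_ffun j ce e) (ins_ffun j cv v))) c j
  = precomp (face T ((esel R ce + vsel R cv * c) / 3) j) (h e v).
Proof.
move=> /forallP eV c01; apply/funext => x; congr T; apply/rowP => k.
rewrite /clamp /h !mxE; case: (unliftP j k) => [k' ->|->].
  rewrite !ins_ffun_lift !mxE.
  have y01 := clamp01_in (x ord0 k'); rewrite (clamp01_id y01).
  symmetry; apply: clamp01_id; move: y01 (eV k'); rewrite /esel /vsel.
  by case: (e k'); case: (v k') => //= /andP[y0 y1] _; apply/andP; split; lra.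
by rewrite !ins_ffun_at clamp01_id.
Qed.

Lemma SD_eval_face (a b : Rg) n (T : 'rV[R]_n.+1 -> X) (j : 'I_n.+1)
    (G : ('rV[R]_n -> X) -> Rg) :
  SD_eval T (fun S => (-1) ^+ j * a * G (face S 0 j) + (-1) ^+ j * b * G (face S 1 j))
  = (-1) ^+ j * a * SD_eval (face T 0 j) G + (-1) ^+ j * b * SD_eval (face T 1 j) G.
Proof.
rewrite /SD_eval !mulr_sumr -big_split (big_ins_ffun _ j).
under eq_bigr => ce _ do under eq_bigr => e _ do rewrite (big_ins_ffun _ j).
rewrite exchange_big; apply: eq_bigr => e _.
under eq_bigr => ce _ do rewrite exchange_big.
rewrite exchange_big !mulr_sumr -big_split; apply: eq_bigr => v _ /=.
rewrite !big_bool /= !inV_ins_ffun !prod_vsel_ins_ffun.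
have [eV|_] := boolP (inV e v); last by rewrite !andbF !mulr0 !addr0.
rewrite !andbT /= !face_precomp_h ?lexx ?ler01 // /esel /vsel.
have third1 : (2 + -1 * 1) / 3 = (0 + 1 * 1) / 3 :> R by congr (_ / _); ring.
have third3 : (2 + 1 * 1) / 3 = 1 :> R by field.
rewrite third1 third3 !mulr0 !addr0 mul0r.
ring.
Qed.

Lemma bd_SD_gen (a b : Rg) n (T : 'rV[R]_n.+1 -> X) (G : ('rV[R]_n -> X) -> Rg) :
  \sum_(q <- SD_gen Rg T) q.1 * \sum_(r <- bd_gen a b q.2) r.1 * G r.2
  = \sum_(q <- bd_gen a b T) q.1 * \sum_(r <- SD_gen Rg q.2) r.1 * G r.2.
Proof.
rewrite (big_SD_gen _ (fun q => \sum_(r <- bd_gen a b q) r.1 * G r.2)).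
rewrite (big_bd_gen _ _ _ (fun q => \sum_(r <- SD_gen Rg q) r.1 * G r.2)) /=.
rewrite (funext (fun S => big_bd_gen a b S G)).
rewrite SD_eval_sum; apply: eq_bigr => j _.
by rewrite SD_eval_face !big_SD_gen.
Qed.

Lemma coeff_lin_lin m k l (f : ('rV[R]_m -> X) -> chain R X Rg k)
    (g : ('rV[R]_k -> X) -> chain R X Rg l) (c : chain R X Rg m) U :
  coeff (lin g (lin f c)) U
  = \sum_(p <- c) p.1 * \sum_(q <- f p.2) q.1 * \sum_(r <- g q.2) r.1 * kdelta U r.2.
Proof.
by rewrite coeffE (big_lin g) (big_lin f c (fun V => \sum_(q <- g V) q.1 * kdelta U q.2)).
Qed.

End Subdivision.

Theorem lemma3 (Rg : comPzRingType) (a b : Rg) (R : realType)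
  (X : topologicalType) (n : nat) (c : chain R X Rg n.+1) :
  is_chain c ->
  coeff (lin (@bd_gen R X Rg a b n) (lin (@SD_gen R X Rg n.+1) c))
  = coeff (lin (@SD_gen R X Rg n) (lin (@bd_gen R X Rg a b n) c)).
Proof.
move=> _; apply/funext => U; rewrite !coeff_lin_lin.
by apply: eq_bigr => p _; rewrite bd_SD_gen.
Qed.
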